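(* The class of data languages accepted by SAFA is closed under concatenation: for any SAFA $M_1,M_2$ over $\Sigma\times D$, there is a SAFA $M$ with $L(M)=\{uv: u\in L(M_1),\ v\in L(M_2)\}$.
   Context: $D$ is a fixed countably infinite set of data values; for a finite alphabet $\Sigma$, data words are elements of $(\Sigma\times D)^*$. A set augmented finite automaton (SAFA) is a tuple $M=(Q,\Sigma\times D,q_0,F,H,\delta)$: $Q$ finite set of states, $q_0\in Q$ initial, $F\subseteq Q$ final, $H=\{h_1,\dots,h_m\}$ a finite collection of (names of) sets of data values, $\delta\subseteq Q\times\Sigma\times C\times OP\times Q$ with $C=\{p(h_i),\,!p(h_i): h_i\in H\}$, $OP=\{-\}\cup\{\mathsf{ins}(h_i):h_i\in H\}$. Configurations are $(q,\langle S_1,\dots,S_m\rangle)$ with $S_i\subseteq D$ finite; initially state $q_0$ and all sets empty. On reading $(a,d)$, a transition $(q,a,\alpha,op,q')$ from the current state may be taken if $\alpha=p(h_i)$ and $d\in S_i$, or $\alpha=\,!p(h_i)$ and $d\notin S_i$; then the state becomes $q'$ and if $op=\mathsf{ins}(h_j)$ the value $d$ is added to $S_j$ ($op=-$ changes nothing). A word is accepted if some run reads it entirely and ends in $F$; $L(M)$ is the set of accepted words. *)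

From mathcomp Require Import all_boot.
Set Implicit Arguments. Unset Strict Implicit. Unset Printing Implicit Defensive.

(* The fixed countably infinite set of data values D is taken to be nat. *)
Definition D := nat.

(* The sets H = {h_0,...,h_(m-1)} are indexed by 'I_m.
   A condition (b, i) stands for p(h_i) if b = true and !p(h_i) if b = false.
   An operation None stands for "-", Some j for ins(h_j). *)
Record SAFA (Sigma : finType) := Safa {
  st : finType;
  nsets : nat;
  q0 : st;
  final : {set st};
  delta : {set st * Sigma * (bool * 'I_nsets) * option 'I_nsets * st}
}.

Definition sets_of (Sigma : finType) (M : SAFA Sigma) := 'I_(nsets M) -> seq D.

Definition cond_holds (Sigma : finType) (M : SAFA Sigma) (S : sets_of M)
    (c : bool * 'I_(nsets M)) (d : D) : bool :=
  if c.1 then d \in S c.2 else d \notin S c.2.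

Definition apply_op (Sigma : finType) (M : SAFA Sigma) (S : sets_of M)
    (op : option 'I_(nsets M)) (d : D) : sets_of M :=
  match op with
  | None => S
  | Some j => fun i => if i == j then d :: S i else S i
  end.

Fixpoint accepts_from (Sigma : finType) (M : SAFA Sigma) (q : st M) (S : sets_of M)
    (w : seq (Sigma * D)) : Prop :=
  match w with
  | [::] => q \in final M
  | (a, d) :: w' =>
      exists (c : bool * 'I_(nsets M)) (op : option 'I_(nsets M)) (q' : st M),
        (q, a, c, op, q') \in delta M /\ cond_holds S c d /\
        @accepts_from Sigma M q' (apply_op S op d) w'
  end.

Definition lang (Sigma : finType) (M : SAFA Sigma) (w : seq (Sigma * D)) : Prop :=
  @accepts_from Sigma M (q0 M) (fun _ => [::]) w.

From mathcomp Require Import all_boot.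
From Stdlib Require Import FunctionalExtensionality.

Set Implicit Arguments. Unset Strict Implicit.

(* The concatenation automaton runs M1 on the states inl q and the first
   [nsets M1] sets, then M2 on the states inr q and the last [nsets M2] sets.
   Since there are no silent moves, the switch is made by copying every
   transition of M2 leaving q0 M2 to every final state of M1, and inl q is
   final when q is final and M2 accepts the empty word.  As each automaton
   only reads and writes its own block of sets, a run from inl q is a run of
   M1 followed by a run of M2 whose sets are still the initial (empty) ones. *)

Section Concatenation.

Variables (Sigma : finType) (M1 M2 : SAFA Sigma).

Local Notation n1 := (nsets M1).
Local Notation n2 := (nsets M2).
Local Notation trans M :=
  (st M * Sigma * (bool * 'I_(nsets M)) * option 'I_(nsets M) * st M)%type.

Definition concat_st : finType := (st M1 + st M2)%type.

Definition concat_trans : finType :=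
  (concat_st * Sigma * (bool * 'I_(n1 + n2)) * option 'I_(n1 + n2) * concat_st)%type.

Definition embed_trans (M : SAFA Sigma) (src dst : st M -> concat_st)
    (reg : 'I_(nsets M) -> 'I_(n1 + n2)) (t : trans M) : concat_trans :=
  let: (q, a, (b, i), op, q') := t in (src q, a, (b, reg i), omap reg op, dst q').

Definition initial_trans (M : SAFA Sigma) : {set trans M} :=
  [set t in delta M | let: (q, _, _, _, _) := t in q == q0 M].

Definition concat_delta : {set concat_trans} :=
  embed_trans inl inl (lshift n2) @: delta M1
  :|: embed_trans inr inr (@rshift n1 n2) @: delta M2
  :|: \bigcup_(q in final M1)
        embed_trans (fun=> inl q) inr (@rshift n1 n2) @: initial_trans M2.

Definition concat_final : {set concat_st} :=
  [set x | match x with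
           | inl q => (q \in final M1) && (q0 M2 \in final M2)
           | inr q => q \in final M2
           end].

Definition concat : SAFA Sigma :=
  @Safa Sigma concat_st (n1 + n2) (inl (q0 M1)) concat_final concat_delta.

Local Notation accepts := (@accepts_from Sigma concat).

Definition left_sets (S : sets_of concat) : sets_of M1 := fun i => S (lshift n2 i).
Definition right_sets (S : sets_of concat) : sets_of M2 := fun i => S (rshift n1 i).

Lemma left_sets_apply_lshift (S : sets_of concat) op d :
  left_sets (@apply_op _ concat S (omap (lshift n2) op) d) =
  apply_op (left_sets S) op d.
Proof. by case: op. Qed.

Lemma right_sets_apply_lshift (S : sets_of concat) op d :
  right_sets (@apply_op _ concat S (omap (lshift n2) op) d) = right_sets S.
Proof.
case: op => [j|] //; apply: functional_extensionality => i.
by rewrite /right_sets /= eq_rlshift.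
Qed.

Lemma right_sets_apply_rshift (S : sets_of concat) op d :
  right_sets (@apply_op _ concat S (omap (@rshift n1 n2) op) d) =
  apply_op (right_sets S) op d.
Proof.
case: op => [j|] //; apply: functional_extensionality => i.
by rewrite /right_sets /= eq_rshift.
Qed.

Lemma concat_delta_left q a b i op q' :
  (q, a, (b, i), op, q') \in delta M1 ->
  (inl q, a, (b, lshift n2 i), omap (lshift n2) op, inl q') \in concat_delta.
Proof.
by move=> t_in; rewrite !inE -orbA; apply/or3P/Or31/imsetP; exists (q, a, (b, i), op, q').
Qed.

Lemma concat_delta_right q a b i op q' :
  (q, a, (b, i), op, q') \in delta M2 ->
  (inr q, a, (b, rshift n1 i), omap (@rshift n1 n2) op, inr q') \in concat_delta.
Proof.
by move=> t_in; rewrite !inE -orbA; apply/or3P/Or32/imsetP; exists (q, a, (b, i), op, q').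
Qed.

Lemma concat_delta_switch p a b i op q' :
  p \in final M1 -> (q0 M2, a, (b, i), op, q') \in delta M2 ->
  (inl p, a, (b, rshift n1 i), omap (@rshift n1 n2) op, inr q') \in concat_delta.
Proof.
move=> p_fin t_in; rewrite !inE -orbA; apply/or3P/Or33/bigcupP; exists p => //.
by apply/imsetP; exists (q0 M2, a, (b, i), op, q'); rewrite // inE t_in /=.
Qed.

Lemma concat_delta_inr q a c op x :
  (inr q, a, c, op, x) \in concat_delta ->
  exists b i op' q', [/\ (q, a, (b, i), op', q') \in delta M2,
    c = (b, rshift n1 i), op = omap (@rshift n1 n2) op' & x = inr q'].
Proof.
rewrite !inE -orbA => /or3P[/imsetP[[[[[? ?] [? ?]] ?] ?] _ //] |
  /imsetP[[[[[p a'] [b i]] op'] q'] t_in [-> -> -> -> ->]] |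
  /bigcupP[p _ /imsetP[[[[[? ?] [? ?]] ?] ?] _ //]]].
by exists b, i, op', q'.
Qed.

Lemma concat_delta_inl q a c op x :
  (inl q, a, c, op, x) \in concat_delta ->
  (exists b i op' q', [/\ (q, a, (b, i), op', q') \in delta M1,
     c = (b, lshift n2 i), op = omap (lshift n2) op' & x = inl q'])
  \/ (q \in final M1 /\
      exists b i op' q', [/\ (q0 M2, a, (b, i), op', q') \in delta M2,
        c = (b, rshift n1 i), op = omap (@rshift n1 n2) op' & x = inr q']).
Proof.
rewrite !inE -orbA => /or3P[/imsetP[[[[[p a'] [b i]] op'] q'] t_in [-> -> -> -> ->]] |
  /imsetP[[[[[? ?] [? ?]] ?] ?] _ //] |
  /bigcupP[p p_fin /imsetP[[[[[p' a'] [b i]] op'] q'] t_in [-> -> -> -> ->]]]].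
- by left; exists b, i, op', q'.
- move: t_in; rewrite inE => /andP[+ /eqP p'E]; rewrite p'E => t_in.
  by right; split=> //; exists b, i, op', q'.
Qed.

Lemma accepts_inr q S w :
  accepts (inr q) S w <-> accepts_from q (right_sets S) w.
Proof.
elim: w q S => [|[a d] w IHw] q S /=; first by rewrite inE.
split=> [[c [op [x [/concat_delta_inr[b [i [op' [q' [t_in -> -> ->]]]]] [hc acc]]]]] |
         [[b i] [op [q' [t_in [hc acc]]]]]].
- exists (b, i), op', q'; rewrite -right_sets_apply_rshift.
  by split=> //; split=> //; apply/IHw.
- exists (b, rshift n1 i), (omap (@rshift n1 n2) op), (inr q').
  split; first exact: concat_delta_right.
  by split=> //; apply/IHw; rewrite right_sets_apply_rshift.
Qed.

Lemma accepts_inl q S w :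
  accepts (inl q) S w <->
  exists u v, [/\ w = u ++ v, accepts_from q (left_sets S) u
                & accepts_from (q0 M2) (right_sets S) v].
Proof.
elim: w q S => [|[a d] w IHw] q S /=.
  rewrite inE; split=> [/andP[q_fin nil_acc] | [[|? ?] [[|? ?] [//= _ q_fin nil_acc]]]].
    by exists [::], [::].
  by rewrite q_fin nil_acc.
split=> [[c [op [x [/concat_delta_inl step [hc acc]]]]] |
         [[|[a' d'] u] [v [/= wE u_acc v_acc]]]].
- case: step => [[b [i [op' [q' [t_in ? ? ?]]]]] | [q_fin [b [i [op' [q' [t_in ? ? ?]]]]]]];
    subst c op x.
  + have [u [v [-> u_acc v_acc]]] := (IHw _ _).1 acc.
    exists ((a, d) :: u), v; split=> //.
      by exists (b, i), op', q'; rewrite -left_sets_apply_lshift.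
    by rewrite -(right_sets_apply_lshift S op' d).
  + exists [::], ((a, d) :: w); split=> //.
    exists (b, i), op', q'; rewrite -right_sets_apply_rshift.
    by split=> //; split=> //; apply/accepts_inr.
- move: v_acc; rewrite -wE => -[[b i] [op [q' [t_in [hc acc]]]]].
  exists (b, rshift n1 i), (omap (@rshift n1 n2) op), (inr q').
  split; first exact: concat_delta_switch.
  by split=> //; apply/accepts_inr; rewrite right_sets_apply_rshift.
- case: wE u_acc => -> -> wE [[b i] [op [q' [t_in [hc acc]]]]].
  exists (b, lshift n2 i), (omap (lshift n2) op), (inl q').
  split; first exact: concat_delta_left.
  split=> //; apply/IHw.
  by exists u, v; rewrite left_sets_apply_lshift right_sets_apply_lshift.
Qed.

End Concatenation.

Theorem theorem6 (Sigma : finType) (M1 M2 : SAFA Sigma) :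
  exists M : SAFA Sigma, forall w : seq (Sigma * D),
    lang M w <-> exists u v, w = u ++ v /\ lang M1 u /\ lang M2 v.
Proof.
exists (concat M1 M2) => w.
split=> [/accepts_inl[u [v [wE u_acc v_acc]]] | [u [v [wE [u_acc v_acc]]]]].
- by exists u, v.
- by apply/accepts_inl; exists u, v.
Qed.
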